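(* Let $X$, $d$, $(e_n,e_n^* )$, $\mathbb{P}$, $V$, $F$, $(g_k)$, $(m_k)$, $(\lambda_k)$, $S$ and $T$ be as in the context. Then the $d$-fold direct sum $T_d=T\oplus\cdots\oplus T$ on $X^d$ is not recurrent.
   Context: Let $X$ be a separable infinite-dimensional complex Banach space and $d\in\mathbb{N}$. Let $(e_n,e_n^* )_{n\in\mathbb{N}}\subset X\times X^*$ satisfy: $\mathrm{span}\{e_n\}$ is dense in $X$, $e_n^*(e_m)=\delta_{n,m}$, $\|e_n\|=1$ and $\sup_n\|e_n^*\|<\infty$. Let $V=\mathrm{span}(e_1,\dots,e_d)$ and $\mathbb{P}x=\sum_{i=1}^d e_i^*(x)e_i$. Let $F\subset V$ be asymptotically separated (i.e. there are $g_n\in X^*$ with $\liminf_n|g_n(x)|=0$ for $x\in F$ and $\lim_n|g_n(x)|=\infty$ for $x\in V\setminus F$), with both $F$ and $V\setminus F$ dense in $V$. Let $(m_k)$ be an increasing sequence of positive integers with $m_k\mid m_{k+1}$ for all $k$ and $\sum_{k\ge d+1}\frac{m_{k-2}}{m_{k-1}}\|g_k\|<\infty$. Let $\lambda_k=1$ for $1\le k\le d$ and $\lambda_k=\exp(i\pi/m_k)$ for $k>d$, and let $S$ be the bounded operator on $X$ extending $\sum_{k=1}^\ell x_ke_k\mapsto\sum_{k=1}^\ell\lambda_kx_ke_k$. Define $Tx=Sx+\sum_{k=d+1}^\infty\frac{1}{m_{k-1}}g_k(\mathbb{P}x)e_k$. It is known (Augé) that $T$ is a bounded operator with $\{x:\|T^nx\|\to\infty\}=\mathbb{P}^{-1}(V\setminus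 F)$ and $\mathrm{Rec}(T)=\mathbb{P}^{-1}(F)$, where $\mathrm{Rec}(T)$ is the set of $x$ with $T^{\omega_n}x\to x$ for some strictly increasing sequence $(\omega_n)$ of positive integers. An operator is recurrent if its set of recurrent vectors is dense. *)

(* Complex scalars are [R[i]] (mathcomp-real-closed's
   [complex R]) for [R : realType]; a complex Banach space is a
   [completeNormedModType R[i]]. *)
From mathcomp Require Import all_boot all_order all_algebra.
From mathcomp Require Import all_classical all_reals all_analysis.
From mathcomp Require Export complex.
Import Order.TTheory GRing.Theory Num.Theory.
Import numFieldTopology.Exports numFieldNormedType.Exports.

Set Implicit Arguments.
Unset Strict Implicit.
Unset Printing Implicit Defensive.

Local Open Scope ring_scope.
Local Open Scope classical_set_scope.

Section Defs.
Variable R : realType.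
Local Notation C := (R[i]).

(* real value of the (complex-valued, real and nonnegative) norm *)
Definition rnorm (V : normedModType C) (x : V) : R := complex.Re `|x|.
Definition cabs (z : C) : R := complex.Re `|z|.

Variable X : normedModType C.

Definition is_dual (f : X -> C) : Prop :=
  (forall (a : C) (x y : X), f (a *: x + y) = a * f x + f y) /\ continuous (f : X -> (C : numFieldType)).

Definition is_bounded_op (A : X -> X) : Prop :=
  (forall (a : C) (x y : X), A (a *: x + y) = a *: A x + A y) /\ continuous A.

Definition opnorm (f : X -> C) : R :=
  sup [set cabs (f x) | x in [set x : X | rnorm x <= 1]].

Definition separable_space : Prop :=
  exists D : set X, countable D /\ closure D = setT.

Definition infinite_dimensional : Prop :=
  ~ exists s : seq X, forall x : X,
      exists c : nat -> C, x = \sum_(i < size s) c i *: nth 0 s i.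

End Defs.

Definition recurrent_vector (U : topologicalType) (T : U -> U) (x : U) : Prop :=
  exists w : nat -> nat,
    (forall n, (0 < w n)%N) /\ (forall n, (w n < w n.+1)%N) /\
    ((fun n => iter (w n) T x) @ \oo --> x).

Definition Rec (U : topologicalType) (T : U -> U) : set U :=
  [set x | recurrent_vector T x].

Definition recurrent_op (U : topologicalType) (T : U -> U) : Prop :=
  closure (Rec T) = setT.

(* the d-fold direct sum T (+) ... (+) T on X^d, with X^d carrying the
   product topology (= the norm topology of the direct sum) *)
Definition dsum (U : topologicalType) (d : nat) (T : U -> U) :
  {ptws 'I_d -> U} -> {ptws 'I_d -> U} :=
  fun y => (fun i => T (y i)).
Arguments dsum {U} d T _ _.


(* If the d-fold sum of T were recurrent, then, since the d x d matrix
   (e_j^*(y_i)) is invertible for y near (e_1, ..., e_d), there would be a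
   recurrent d-tuple y such that P maps the span of the y_i onto V.  As T is
   linear, every combination of the y_i is recurrent for T, in particular some
   z with P z in V \ F.  But P is T-invariant and for k > d the k-th coordinate
   of T^n z is lambda_k^n e_k^*(z) + (g_k(P z) / m_(k-1)) sum_(j < n) lambda_k^j.
   When m_(k-1) <= 4n < m_k the geometric sum has modulus at least n/2, so the
   coordinate is at least |g_k(P z)| / 8 up to a bounded error; since
   |g_k(P z)| -> oo, no orbit of z along increasing times stays bounded. *)

From mathcomp Require Import all_boot all_order all_algebra.
From mathcomp Require Import all_classical all_reals all_analysis.
From mathcomp Require Import complex.
From mathcomp Require Import ring lra zify.
Import Order.TTheory GRing.Theory Num.Theory.
Import numFieldTopology.Exports numFieldNormedType.Exports.

Set Implicit Arguments.
Unset Strict Implicit.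
Unset Printing Implicit Defensive.

Local Open Scope ring_scope.
Local Open Scope classical_set_scope.
Local Open Scope complex_scope.

Section ComplexModulus.
Variable R : realType.
Implicit Types (z w : R[i]) (t : R).

Lemma normc_cabs z : `|z| = (cabs z)%:C.
Proof. by rewrite /cabs RRe_real ?normr_real. Qed.

Lemma cabs_ge0 z : 0 <= cabs z.
Proof. by rewrite /cabs normc_def /= sqrtr_ge0. Qed.

Lemma cabsM z w : cabs (z * w) = cabs z * cabs w.
Proof. by apply: (@complexI R); rewrite rmorphM /= -!normc_cabs normrM. Qed.

Lemma cabsB z w : cabs (z - w) <= cabs z + cabs w.
Proof. by rewrite -(@lecR R) rmorphD /= -!normc_cabs ler_normB. Qed.

Lemma cabsR (r : R) : cabs r%:C = `|r|.
Proof. by rewrite /cabs normc_def /= expr0n /= addr0 sqrtr_sqr. Qed.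

Lemma cabs_natV n : cabs ((n%:R : R[i])^-1) = n%:R^-1.
Proof.
rewrite /cabs ger0_norm ?invr_ge0 ?ler0n //.
by rewrite -(rmorph_nat (@real_complex_def R (Phant R))) -fmorphV.
Qed.

Lemma Re_le_cabs z : complex.Re z <= cabs z.
Proof. by apply: le_trans (ler_norm _) _; rewrite -lecR -normc_cabs normc_ge_Re. Qed.

Definition cis t : R[i] := Complex (cos t) (sin t).

Lemma cisX t n : cis t ^+ n = cis (n%:R * t).
Proof.
elim: n => [|n IH]; first by rewrite expr0 mul0r /cis cos0 sin0.
rewrite exprS IH -[n.+1]addn1 natrD mulrDl mul1r /cis cosD sinD.
by apply/eqP; rewrite eq_complex /=; apply/andP; split; apply/eqP; ring.
Qed.

Lemma cabs_cisX t n : cabs (cis t ^+ n) = 1.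
Proof. by rewrite /cabs normrX normc_def /= cos2Dsin2 sqrtr1 expr1n. Qed.

Lemma cos_ge_half t : 0 <= t <= pi / 4%:R -> 2^-1 <= cos t.
Proof.
move=> /andP[t0 t4].
have pi0 := pi_ge0 R.
have ct0 : 0 <= cos t by apply: cos_ge0_pihalf; apply/andP; split; lra.
have c2t0 : 0 <= cos (t *+ 2).
  by apply: cos_ge0_pihalf; rewrite [t *+ 2]mulr2n; apply/andP; split; lra.
rewrite cos_mulr2n in c2t0; nra.
Qed.

(* Up to the time [M / 4] the powers of [cis (pi / M)] stay in the sector
   [|arg| <= pi / 4], where their real parts are at least [1/2]. *)
Lemma sum_cisX_ge (M n : nat) : (0 < M)%N -> (4 * n <= M)%N ->
  n%:R / 2 <= cabs (\sum_(j < n) cis (pi / M%:R) ^+ j).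
Proof.
move=> M0 nM; apply: le_trans (Re_le_cabs _).
have -> : complex.Re (\sum_(j < n) cis (pi / M%:R) ^+ j)
          = \sum_(j < n) cos (j%:R * (pi / M%:R)).
  by rewrite raddf_sum; apply: eq_bigr => j _; rewrite cisX.
have -> : n%:R / 2 = \sum_(j < n) (2^-1 : R).
  by rewrite sumr_const card_ord -[RHS]mulr_natl.
apply: ler_sum => j _; apply: cos_ge_half.
have Mp : (0 : R) < M%:R by rewrite ltr0n.
apply/andP; split; first by rewrite mulr_ge0 ?divr_ge0 ?pi_ge0.
rewrite mulrCA ler_pM2l ?pi_gt0 // ler_pdivrMr // mulrC ler_pdivlMr ?ltr0n //.
by rewrite -natrM ler_nat; have := ltn_ord j; lia.
Qed.

End ComplexModulus.

Lemma normv_rnorm (R : realType) (V : normedModType R[i]) (x : V) :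
  `|x| = (rnorm x)%:C.
Proof. by rewrite /rnorm RRe_real ?normr_real. Qed.

Lemma rnorm_ge0 (R : realType) (V : normedModType R[i]) (x : V) : 0 <= rnorm x.
Proof. by have := normr_ge0 x; rewrite lecE => /andP[]. Qed.

Section LinearMap.
Variables (R : realType) (U V : lmodType R[i]) (A : U -> V).
Hypothesis A_lin : forall a x y, A (a *: x + y) = a *: A x + A y.

Lemma lin0 : A 0 = 0.
Proof.
have := A_lin 1 0 0; rewrite !scale1r addr0 => h.
by apply: (addrI (A 0)); rewrite addr0 -h.
Qed.

Lemma linD x y : A (x + y) = A x + A y.
Proof. by rewrite -[x]scale1r A_lin !scale1r. Qed.

Lemma linZ a x : A (a *: x) = a *: A x.
Proof. by rewrite -[a *: x]addr0 A_lin lin0 addr0. Qed.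

Lemma lin_sum (I : Type) (r : seq I) (P : pred I) (F : I -> U) :
  A (\sum_(i <- r | P i) F i) = \sum_(i <- r | P i) A (F i).
Proof. exact: (big_morph A linD lin0). Qed.

End LinearMap.

Lemma iter_lin (R : realType) (U : lmodType R[i]) (A : U -> U) :
  (forall a x y, A (a *: x + y) = a *: A x + A y) ->
  forall n a x y, iter n A (a *: x + y) = a *: iter n A x + iter n A y.
Proof. by move=> A_lin; elim=> [//|n IH] a x y; rewrite !iterS IH A_lin. Qed.

Section DualNorm.
Variables (R : realType) (X : normedModType R[i]) (f : X -> R[i]).
Hypothesis f_dual : is_dual f.

Lemma opnorm_ubound :
  has_ubound [set cabs (f x) | x in [set x : X | rnorm x <= 1]].
Proof.
have f0 : f 0 = 0 := lin0 f_dual.1.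
have : (f : X -> (R[i] : numFieldType)) x @[x --> (0 : X)] -->
    (0 : (R[i] : numFieldType)).
  by rewrite -f0; exact: f_dual.2.
move=> /cvgr_dist_lt /(_ 1 ltr01) /nbhs_normP [del /= del0 Hdel].
exists (cabs (2 / del)) => _ [x /= x1 <-].
have hdel2 : 0 < del / 2 by rewrite divr_gt0.
have : `|0 - f ((del / 2) *: x)| < 1.
  apply: Hdel; rewrite /ball_ /= sub0r normrN normrZ ger0_norm ?(ltW hdel2) //.
  apply: (le_lt_trans (y := del / 2)).
    by rewrite normv_rnorm ler_piMr ?(ltW hdel2) //; move: x1; rewrite -lecR.
  by rewrite ltr_pdivrMr // ltr_pMr // ltr1n.
rewrite sub0r normrN (linZ f_dual.1) normrM ger0_norm ?(ltW hdel2) // => h.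
rewrite -(@lecR R) -!normc_cabs [`|2 / del|]ger0_norm ?divr_ge0 ?(ltW del0) //.
rewrite ler_pdivlMr // (_ : `|f x| * del = del / 2 * `|f x| * 2); last by field.
by rewrite -[X in _ <= X]mul1r ler_pM2r //; apply: ltW.
Qed.

Lemma cabs_dual_le y : cabs (f y) <= opnorm f * rnorm y.
Proof.
have [->|y0] := eqVneq y 0.
  by rewrite (lin0 f_dual.1) /cabs /rnorm !normr0 mulr0.
have ry0 : 0 < rnorm y.
  by rewrite -(@ltcR R) -normv_rnorm normr_gt0.
pose u := ((rnorm y)^-1)%:C *: y.
have ru : rnorm u = 1.
  apply: (@complexI R); rewrite -normv_rnorm normrZ normc_cabs cabsR normv_rnorm.
  by rewrite -rmorphM /= ger0_norm ?invr_ge0 ?(ltW ry0) // mulVf ?gt_eqF.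
have fu : cabs (f u) <= opnorm f.
  by apply: (ub_le_sup opnorm_ubound); exists u => //=; rewrite ru.
have -> : f y = (rnorm y)%:C * f u.
  rewrite -[RHS]/((rnorm y)%:C *: f u) -(linZ f_dual.1).
  by rewrite /u scalerA -rmorphM /= mulfV ?gt_eqF // scale1r.
by rewrite cabsM cabsR gtr0_norm // mulrC ler_pM2r.
Qed.

End DualNorm.

Lemma continuous_eq_on_dense (T : topologicalType) (K : numFieldType)
  (Y : normedModType K) (h1 h2 : T -> Y) (D : set T) :
  continuous h1 -> continuous h2 -> closure D = setT ->
  (forall x, D x -> h1 x = h2 x) -> forall x, h1 x = h2 x.
Proof.
move=> c1 c2 cD hD x; apply/eqP; rewrite -subr_eq0; apply/eqP.
have cf : continuous (h1 - h2) := fun x => continuousB (c1 x) (c2 x).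
have cl0 : closed ((h1 - h2) @^-1` [set 0]).
  apply: closed_comp => [y _|]; first exact: cf.
  exact/accessible_closed_set1/hausdorff_accessible/norm_hausdorff.
have : closure D `<=` (h1 - h2) @^-1` [set 0].
  move/closure_id: cl0 => ->; apply: closureS => y /hD h12.
  by rewrite /preimage /= -[_ = 0]/(h1 y - h2 y = 0) h12 subrr.
by rewrite cD => /(_ x I).
Qed.

Lemma sum_nat_delta (K : pzRingType) (a : nat -> K) (lo N k : nat) :
  \sum_(lo <= i < N) a i * (k == i)%:R = if (lo <= k < N)%N then a k else 0.
Proof.
elim: N => [|N IH]; first by rewrite big_geq // ltn0 andbF.
have [loN|Nlo] := leqP lo N; last first.
  by rewrite big_geq //; case: ifP => // /andP[]; lia.
rewrite big_nat_recr //= IH.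
have [->|kN] := eqVneq k N; first by rewrite ltnn andbF ltnSn loN add0r mulr1.
by rewrite mulr0 addr0 ltnS [(k <= N)%N]leq_eqVlt (negbTE kN).
Qed.

Lemma incr_leq_id (w : nat -> nat) :
  (forall n, (w n < w n.+1)%N) -> forall n, (n <= w n)%N.
Proof. by move=> w_incr; elim=> // n IH; exact: leq_ltn_trans IH (w_incr n). Qed.

Lemma incr_bracket (m : nat -> nat) (K N : nat) :
  (forall k, (K <= k)%N -> (m k < m k.+1)%N) -> (m K <= N)%N ->
  exists2 k, (K < k)%N & (m (k - 1) <= N < m k)%N.
Proof.
move=> m_incr mKN.
have m_grow j : (m K + j <= m (K + j))%N.
  elim: j => [|j IH]; first by rewrite !addn0.
  by rewrite !addnS (leq_ltn_trans IH) // m_incr // leq_addr.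
have [|k /andP[Kk Nk] k_min] := ex_minnP (_ : exists k, (K < k)%N && (N < m k)%N).
  exists (K + N.+1); apply/andP; split; first lia.
  by apply: leq_trans (m_grow _); lia.
exists k => //; rewrite Nk andbT.
have [Kk1|] := ltnP K (k - 1).
  rewrite leqNgt; apply/negP => Nk1.
  by have := k_min (k - 1)%N; rewrite Kk1 Nk1 => /(_ isT); lia.
by move=> k1K; have -> : (k - 1 = K)%N by lia.
Qed.

Section DiagonalPerturbation.
Variables (R : realType) (X : normedModType R[i]).
Variables (e : nat -> X) (es : nat -> X -> R[i]) (d : nat) (m : nat -> nat).
Variables (g : nat -> X -> R[i]) (lambda : nat -> R[i]) (S T : X -> X).

Hypothesis es_dual : forall n, (1 <= n)%N -> is_dual (es n).
Hypothesis es_e : forall n k, (1 <= n)%N -> (1 <= k)%N -> es n (e k) = (n == k)%:R.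
Hypothesis g_dual : forall n, is_dual (g n).

Let P (x : X) := \sum_(1 <= i < d.+1) es i x *: e i.

Lemma es_sum (c : nat -> R[i]) lo N k : (1 <= lo)%N -> (1 <= k)%N ->
  es k (\sum_(lo <= i < N) c i *: e i) = if (lo <= k < N)%N then c k else 0.
Proof.
move=> lo1 k1; rewrite (lin_sum (es_dual k1).1) -sum_nat_delta.
apply: eq_big_nat => i /andP[loi _].
by rewrite (linZ (es_dual k1).1) es_e // (leq_trans lo1 loi).
Qed.

Hypothesis span_dense : closure [set x : X | exists (N : nat) (c : nat -> R[i]),
  x = \sum_(1 <= k < N) c k *: e k] = setT.
Hypothesis S_bounded : is_bounded_op S.
Hypothesis S_diag : forall (l : nat) (x : nat -> R[i]),
  S (\sum_(1 <= k < l.+1) x k *: e k) = \sum_(1 <= k < l.+1) (lambda k * x k) *: e k.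

Lemma es_S k y : (1 <= k)%N -> es k (S y) = lambda k * es k y.
Proof.
move=> k1; have esk := es_dual k1.
apply: (@continuous_eq_on_dense _ R[i] (R[i] : numFieldType) (es k \o S)
  (fun y => lambda k * es k y) _ _ _ span_dense).
- by move=> z; apply: continuous_comp; [exact: S_bounded.2 | exact: esk.2].
- by move=> z; apply: cvgMl_tmp; exact: esk.2.
move=> _ [[|l] [c ->]] /=.
  by rewrite big_geq // (lin0 S_bounded.1) (lin0 esk.1) mulr0.
by rewrite S_diag !es_sum //; case: ifP; rewrite ?mulr0.
Qed.

Hypothesis T_def : forall x : X,
  (fun N : nat => \sum_(d.+1 <= k < N) (((m (k - 1)%N)%:R)^-1 * g k (P x)) *: e k)
    @ \oo --> T x - S x.

Lemma es_T k y : (1 <= k)%N -> es k (T y) = lambda k * es k y +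
  (if (d < k)%N then ((m (k - 1)%N)%:R)^-1 * g k (P y) else 0).
Proof.
move=> k1; have esk := es_dual k1.
rewrite -[T y](subrK (S y)) (linD esk.1) es_S // addrC; congr (_ + _).
pose u N := \sum_(d.+1 <= j < N) (((m (j - 1)%N)%:R)^-1 * g j (P y)) *: e j.
have lim_T : ((es k : X -> (R[i] : numFieldType)) \o u) @ \oo -->
    (es k (T y - S y) : (R[i] : numFieldType)).
  exact: cvg_comp _ _ (@T_def y) (esk.2 _).
have lim_cst : ((es k : X -> (R[i] : numFieldType)) \o u) @ \oo -->
    ((if (d < k)%N then ((m (k - 1)%N)%:R)^-1 * g k (P y) else 0)
      : (R[i] : numFieldType)).
  apply: cvg_near_cst; near=> N; rewrite /= /u es_sum //.
  suff -> : (k < N)%N by rewrite andbT.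
  by near: N; exists k.+1.
exact: cvg_unique _ lim_T lim_cst.
Unshelve. all: by end_near.
Qed.

Lemma T_lin a x y : T (a *: x + y) = a *: T x + T y.
Proof.
have P_lin : P (a *: x + y) = a *: P x + P y.
  rewrite /P scaler_sumr -big_split; apply: eq_big_nat => i /andP[i1 _].
  by rewrite (linD (es_dual i1).1) (linZ (es_dual i1).1) scalerDl scalerA.
pose u z N := \sum_(d.+1 <= k < N) (((m (k - 1)%N)%:R)^-1 * g k (P z)) *: e k.
have u_lin : u (a *: x + y) = (fun N => a *: u x N + u y N).
  apply/funext => N; rewrite /u scaler_sumr -big_split; apply: eq_bigr => k _.
  rewrite P_lin (linD (g_dual k).1) (linZ (g_dual k).1) /= scalerA -scalerDl.
  by congr (_ *: _); rewrite mulrDr mulrCA.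
have lim_lin : (fun N => a *: u x N + u y N) @ \oo --> T (a *: x + y) - S (a *: x + y).
  by rewrite -u_lin; exact: T_def.
have lim_sum : (fun N => a *: u x N + u y N) @ \oo --> a *: (T x - S x) + (T y - S y).
  by apply: cvgD; [apply: cvgZl_tmp |]; exact: T_def.
have := cvg_unique (@norm_hausdorff _ X) lim_lin lim_sum.
rewrite S_bounded.1 => eqT.
by rewrite -[T _](subrK (a *: S x + S y)) eqT scalerBr addrACA !subrK.
Qed.

Hypothesis lambda_head : forall k, (k <= d)%N -> lambda k = 1.

Lemma P_iter n y : P (iter n T y) = P y.
Proof.
elim: n => [//|n IH]; rewrite iterS -[RHS]IH /P.
apply: eq_big_nat => i /andP[i1 id].
by rewrite es_T // lambda_head // mul1r ltnNge -ltnS id addr0.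
Qed.

Lemma es_iter k n y : (d < k)%N -> es k (iter n T y) =
  lambda k ^+ n * es k y + (m (k - 1)%N)%:R^-1 * g k (P y) * \sum_(j < n) lambda k ^+ j.
Proof.
move=> dk; have k1 : (1 <= k)%N by apply: leq_ltn_trans dk.
elim: n => [|n IH]; first by rewrite big_ord0 expr0 mul1r mulr0 addr0.
have geomS : \sum_(j < n.+1) lambda k ^+ j = 1 + lambda k * \sum_(j < n) lambda k ^+ j.
  rewrite big_ord_recl expr0 mulr_sumr; congr (_ + _); apply: eq_bigr => j _.
  by rewrite /= /bump /= add1n exprS.
by rewrite iterS es_T // dk P_iter IH geomS exprS; ring.
Qed.

Variable M : R.
Hypothesis M_ge0 : 0 <= M.
Hypothesis es_opnorm : forall n, (1 <= n)%N -> opnorm (es n) <= M.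
Hypothesis d_gt0 : (0 < d)%N.
Hypothesis m_gt0 : forall k, (1 <= k)%N -> (0 < m k)%N.
Hypothesis lambda_tail : forall k, (d < k)%N -> lambda k = cis (pi / (m k)%:R).

Lemma g_le_at_gap x k W B :
  (d < k)%N -> (m (k - 1) <= 4 * W)%N -> (4 * W < m k)%N -> rnorm (iter W T x) <= B ->
  cabs (g k (P x)) <= 8 * (M * B + M * rnorm x).
Proof.
move=> dk mW Wm hB.
have k1 : (1 <= k)%N by apply: leq_ltn_trans dk.
have mk1 : (0 < m (k - 1))%N by apply: m_gt0; lia.
set G := cabs (g k (P x)); set K := M * B + M * rnorm x.
set s := cabs (\sum_(j < W) lambda k ^+ j).
set mr : R := (m (k - 1))%:R; set Wr : R := W%:R.
have s_ge : Wr / 2 <= s.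
  by rewrite /s lambda_tail //; apply: sum_cisX_ge; [exact: m_gt0 | exact: ltnW].
have es_le z : cabs (es k z) <= M * rnorm z.
  exact: le_trans (cabs_dual_le (es_dual k1) z) (ler_wpM2r (rnorm_ge0 z) (es_opnorm k1)).
have forced : mr^-1 * G * s <= K.
  have -> : mr^-1 * G * s =
      cabs ((m (k - 1))%:R^-1 * g k (P x) * \sum_(j < W) lambda k ^+ j).
    by rewrite !cabsM cabs_natV.
  rewrite -[_ * \sum_(j < W) _](addKr (lambda k ^+ W * es k x)) -es_iter //.
  rewrite addrC; apply: le_trans (cabsB _ _) _.
  rewrite cabsM lambda_tail // cabs_cisX mul1r.
  apply: lerD; last exact: es_le.
  by apply: le_trans (es_le _) _; rewrite ler_wpM2l.
have mr0 : 0 < mr by rewrite ltr0n.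
have mrW : mr <= 4 * Wr by rewrite -natrM ler_nat.
have Wr0 : 0 < Wr by rewrite ltr0n; lia.
have G0 : 0 <= G := cabs_ge0 _.
have K0 : 0 <= K by rewrite addr_ge0 ?mulr_ge0 ?rnorm_ge0 // (le_trans (rnorm_ge0 _) hB).
have Gs : G * s <= mr * K by rewrite -ler_pdivrMl // mulrA.
have GW : G * (Wr / 2) <= G * s by rewrite ler_wpM2l.
nra.
Qed.

Hypothesis m_incr : forall k, (1 <= k)%N -> (m k < m k.+1)%N.

Lemma escaping_orbit_unbounded x (w : nat -> nat) B :
  (fun n => cabs (g n (P x))) @ \oo --> +oo -> (forall n, (w n < w n.+1)%N) ->
  ~ (forall n, rnorm (iter (w n) T x) <= B).
Proof.
move=> /cvgryPgt /(_ (8 * (M * B + M * rnorm x))) [K0 _ g_large] w_incr hB.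
pose K1 := maxn K0 d.+1; pose W := w (m K1).
have mK1 : (m K1 <= 4 * W)%N.
  by apply: leq_trans (incr_leq_id w_incr _) _; rewrite leq_pmull.
have [k K1k /andP[mk Wk]] : exists2 k, (K1 < k)%N & (m (k - 1) <= 4 * W < m k)%N.
  by apply: incr_bracket mK1 => k K1k; apply: m_incr; apply: leq_trans K1k; lia.
have dk : (d < k)%N by lia.
have := g_le_at_gap dk mk Wk (hB (m K1)).
by apply/negP; rewrite -ltNge; apply: g_large => /=; lia.
Qed.

Lemma recurrent_not_escaping x :
  recurrent_vector T x -> ~ (fun n => cabs (g n (P x))) @ \oo --> +oo.
Proof.
move=> [w [_ [w_incr wx]]] gx.
have [B [_ hB]] := cvg_seq_bounded (cvgP _ wx).
apply: (escaping_orbit_unbounded (B := complex.Re (B + 1)) gx w_incr) => n.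
have : `|iter (w n) T x| <= B + 1 by apply: hB => //; rewrite ltrDl ltr01.
by rewrite normv_rnorm lecE => /andP[].
Qed.

End DiagonalPerturbation.

Lemma iter_dsum (U : topologicalType) (d : nat) (T : U -> U) (y : {ptws 'I_d -> U}) n :
  iter n (dsum d T) y = (fun i => iter n T (y i)).
Proof. by elim: n => [//|n IH]; rewrite iterS IH. Qed.

Lemma recurrent_dsum_comb (R : realType) (X : normedModType R[i]) (T : X -> X)
    (d : nat) (y : {ptws 'I_d -> X}) (a : 'I_d -> R[i]) :
  (forall a x y, T (a *: x + y) = a *: T x + T y) ->
  recurrent_vector (dsum d T) y -> recurrent_vector T (\sum_i a i *: y i).
Proof.
move=> T_lin [w [w_gt0 [w_incr wy]]]; exists w; split=> //; split=> //.
have wyi i : (fun n => iter (w n) T (y i)) @ \oo --> y i.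
  have := cvg_comp _ _ wy (@proj_continuous _ _ i y).
  by under eq_cvg do rewrite /= iter_dsum.
under eq_cvg do rewrite (lin_sum (iter_lin T_lin _)).
apply: cvg_big => [|i _]; first exact: add_continuous.
under eq_cvg do rewrite (linZ (iter_lin T_lin _)).
exact: cvgZl_tmp.
Qed.

Lemma cvg_det (K : numFieldType) (T : Type) (F : set_system T) {FF : Filter F}
    (n : nat) (A : T -> 'M[K]_n) (L : 'M[K]_n) :
  (forall i j, A x i j @[x --> F] --> L i j) -> \det (A x) @[x --> F] --> \det L.
Proof.
move=> AL; apply: cvg_big => [|s _]; first exact: add_continuous.
apply: cvgMl_tmp; apply: cvg_big => [|i _]; first exact: mul_continuous.
exact: AL.
Qed.

Section CoordinateMatrix.
Variables (R : realType) (X : normedModType R[i]) (e : nat -> X) (es : nat -> X -> R[i]).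
Variable d : nat.
Hypothesis es_dual : forall n, (1 <= n)%N -> is_dual (es n).
Hypothesis es_e : forall n k, (1 <= n)%N -> (1 <= k)%N -> es n (e k) = (n == k)%:R.

Definition coord_mx (y : 'I_d -> X) : 'M[R[i]]_d := \matrix_(i, j) es j.+1 (y i).

Lemma coord_mx_basis : coord_mx (fun i => e i.+1) = 1%:M.
Proof. by apply/matrixP => i j; rewrite !mxE es_e // eqSS eq_sym. Qed.

Lemma det_coord_mx_near :
  \forall y \near ((fun i => e i.+1) : {ptws 'I_d -> X}), \det (coord_mx y) != 0.
Proof.
pose E : {ptws 'I_d -> X} := fun i => e i.+1.
have entries i j : (coord_mx y i j : (R[i] : numFieldType)) @[y --> E] -->
    (coord_mx E i j : (R[i] : numFieldType)).
  rewrite mxE; under eq_cvg do rewrite mxE.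
  apply: (cvg_comp _ _ (@proj_continuous _ _ i E)).
  exact: (es_dual (ltn0Sn j)).2.
have := cvg_det (FF := nbhs_filter E) entries.
rewrite coord_mx_basis det1 => /cvgr_dist_lt /(_ 1 ltr01); apply: filterS => y.
by apply: contraTneq => ->; rewrite subr0 normr1 ltxx.
Qed.

Lemma coord_mx_solve (y : 'I_d -> X) (c : nat -> R[i]) : \det (coord_mx y) != 0 ->
  exists a : 'I_d -> R[i], \sum_(1 <= i < d.+1) es i (\sum_j a j *: y j) *: e i
                           = \sum_(1 <= i < d.+1) c i *: e i.
Proof.
rewrite -unitfE -unitmxE => y_unit.
pose a := \row_j c j.+1 *m invmx (coord_mx y); exists (fun j => a 0 j).
apply: eq_big_nat => i /andP[i1 id]; congr (_ *: _).
have i_ord : (i.-1 < d)%N by rewrite prednK.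
have := mulmxKV y_unit (\row_j c j.+1).
move/matrixP => /(_ 0 (Ordinal i_ord)); rewrite !mxE prednK // => <-.
rewrite (lin_sum (es_dual i1).1); apply: eq_bigr => j _.
by rewrite (linZ (es_dual i1).1) !mxE prednK.
Qed.

End CoordinateMatrix.

Unset Implicit Arguments.
Local Close Scope complex_scope.

Theorem proposition3p7
  (R : realType) (X : completeNormedModType R[i])
  (d : nat)
  (e : nat -> X) (es : nat -> X -> R[i])
  (F : set X) (g : nat -> X -> R[i]) (m : nat -> nat)
  (S T : X -> X) :
  separable_space X ->
  infinite_dimensional X ->
  (1 <= d)%N ->
  (forall n, (1 <= n)%N -> is_dual (es n)) ->
  closure [set x : X | exists (N : nat) (c : nat -> R[i]),
                         x = \sum_(1 <= k < N) c k *: e k] = setT ->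
  (forall n k, (1 <= n)%N -> (1 <= k)%N -> es n (e k) = (n == k)%:R) ->
  (forall n, (1 <= n)%N -> `|e n| = 1) ->
  (exists M : R, forall n, (1 <= n)%N -> opnorm (es n) <= M) ->
  let V := [set x : X | exists c : nat -> R[i],
                          x = \sum_(1 <= i < d.+1) c i *: e i] in
  let P := fun x : X => \sum_(1 <= i < d.+1) es i x *: e i in
  F `<=` V ->
  (forall n, is_dual (g n)) ->
  (forall x, F x -> limn_einf (fun n => (cabs (g n x))%:E) = 0%E) ->
  (forall x, V x -> ~ F x -> (fun n => cabs (g n x)) @ \oo --> +oo) ->
  V `<=` closure F ->
  V `<=` closure (V `\` F) ->
  (forall k, (1 <= k)%N -> (0 < m k)%N) ->
  (forall k, (1 <= k)%N -> (m k < m k.+1)%N) ->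
  (forall k, (1 <= k)%N -> (m k %| m k.+1)%N) ->
  cvg (series (fun k : nat => if (d < k)%N
                 then (m (k - 2)%N)%:R / (m (k - 1)%N)%:R * opnorm (g k)
                 else 0 : R) @ \oo) ->
  let lambda := fun k : nat => if (k <= d)%N then 1
                  else Complex (cos (pi / (m k)%:R)) (sin (pi / (m k)%:R)) in
  is_bounded_op S ->
  (forall (l : nat) (x : nat -> R[i]),
      S (\sum_(1 <= k < l.+1) x k *: e k)
      = \sum_(1 <= k < l.+1) (lambda k * x k) *: e k) ->
  (forall x : X,
      (fun N : nat => \sum_(d.+1 <= k < N)
                        (((m (k - 1)%N)%:R)^-1 * g k (P x)) *: e k)
        @ \oo --> T x - S x) ->
  ~ recurrent_op (dsum d T).
Proof.
move=> _ _ d_gt0 es_dual span_dense es_e _ [M es_opnorm] V P _ g_dual _ g_escape _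
  VF_dense m_gt0 m_incr _ _ lambda S_bounded S_diag T_def T_rec.
(* Only the escape of (g_n) on V \ F is used; the discarded hypotheses are what
   make T a bounded operator with Rec(T) = P^-1(F). *)
have lambda_head k : (k <= d)%N -> lambda k = 1 by move=> kd; rewrite /lambda kd.
have lambda_tail k : (d < k)%N -> lambda k = cis (pi / (m k)%:R).
  by move=> dk; rewrite /lambda leqNgt dk.
have M_max_ge0 : 0 <= Num.max M 0 by rewrite le_max lexx orbT.
have es_opnorm_max n : (1 <= n)%N -> opnorm (es n) <= Num.max M 0.
  by move=> n1; rewrite le_max es_opnorm.
have T_lin := T_lin es_dual g_dual S_bounded T_def.
have : closure (Rec (dsum d T)) (fun i => e i.+1) by rewrite T_rec.
move=> /(_ _ (det_coord_mx_near d es_dual es_e)) [y [y_rec det_y]].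
have V0 : V 0 by exists (fun=> 0); rewrite big1 // => i _; rewrite scale0r.
have [v [[[c vE] Fv] _]] := VF_dense 0 V0 setT filterT.
have [a Pz] := coord_mx_solve e es_dual c det_y.
apply: (recurrent_not_escaping es_dual es_e span_dense S_bounded S_diag T_def
  lambda_head M_max_ge0 es_opnorm_max d_gt0 m_gt0 lambda_tail m_incr
  (recurrent_dsum_comb a T_lin y_rec)).
by rewrite Pz -vE; apply: g_escape => //; exists c.
Qed.
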